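(* Let $\mu_1,\mu_2$ form an AT-system on nodes $z_1,\dots,z_N$. Let $(A_{n,1},A_{n,2})$, $1\le n\le N$, be the type I multiple orthogonal polynomials on the step-line, with exact degrees $\deg A_{n,j}=n_j-1$ (where $\vec n=(n_1,n_2)$ is the step-line index of $n$), and suppose they satisfy, for $j=1,2$ and $1\le n\le N-2$, $$xA_{n,j}(x)=A_{n-1,j}(x)+b_{n-1}A_{n,j}(x)+c_nA_{n+1,j}(x)+d_{n+1}A_{n+2,j}(x),$$ with $A_{0,j}\equiv0$, where $b_n,c_n,d_n$ are the coefficients of the step-line recurrence of the monic type II polynomials. Then $d_{n+1}\neq0$ for all $n=1,\dots,N-2$.
   Context: Discrete measures: $\mu_j=\sum_{i=1}^N\alpha_{j,i}\delta_{z_i}$, $j=1,2$, with $\alpha_{j,i}>0$ and distinct real $z_i$; $\Delta\subset\mathbb{R}$ is an interval containing all $z_i$. A system of $n$ linearly independent functions on $\Delta$ is a Chebyshev system if every nontrivial real linear combination has at most $n-1$ zeros in $\Delta$. The measures form an AT-system if there exist continuous functions $\alpha_1,\alpha_2$ on $\Delta$ with $\alpha_j(z_i)=\alpha_{j,i}$ such that for every $(n_1,n_2)$ with $n_1+n_2\le N$ the functions $x^k\alpha_1(x)$ ($0\le k\le n_1-1$), $x^k\alpha_2(x)$ ($0\le k\le n_2-1$) form a Chebyshev system on $\Delta$. Step-line index: $n=2k\mapsto\vec n=(k,k)$, $n=2k+1\mapsto\vec n=(k+1,k)$. Type I MOPs for index $\vec n$: polynomials $A_{\vec n,1},A_{\vec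 n,2}$ with $\deg A_{\vec n,j}\le n_j-1$ such that $\sum_{i=1}^N\big(\alpha_{1,i}A_{\vec n,1}(z_i)+\alpha_{2,i}A_{\vec n,2}(z_i)\big)z_i^k$ equals $0$ for $0\le k\le |\vec n|-2$ and $1$ for $k=|\vec n|-1$; $A_{n,j}:=A_{\vec n,j}$. Monic type II MOP $P_n$: monic of degree $n=|\vec n|$ with $\sum_i\alpha_{j,i}P_n(z_i)z_i^k=0$ for $0\le k\le n_j-1$, $j=1,2$; they satisfy $xP_n=P_{n+1}+b_nP_n+c_nP_{n-1}+d_nP_{n-2}$. *)

From HB Require Import structures.
From mathcomp Require Import all_boot all_order all_algebra.
From mathcomp Require Import all_classical all_reals topology normedtype.
Import numFieldNormedType.Exports.
Set Implicit Arguments. Unset Strict Implicit. Unset Printing Implicit Defensive.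
Import Order.TTheory GRing.Theory Num.Theory.
Local Open Scope classical_set_scope.
Local Open Scope ring_scope.

(* Step-line multi-index: n = 2k -> (k,k), n = 2k+1 -> (k+1,k). *)
Definition sl1 (n : nat) : nat := uphalf n.
Definition sl2 (n : nat) : nat := n./2.

(* The functions x^k a1(x) (k < n1), x^k a2(x) (k < n2) form a Chebyshev
   system on Delta.  A real linear combination of them is exactly
   p1(x) a1(x) + p2(x) a2(x) with deg p1 <= n1-1, deg p2 <= n2-1. *)
Definition chebyshev_pair {R : realType} (Delta : interval R)
  (a1 a2 : R -> R) (n1 n2 : nat) : Prop :=
  (forall p1 p2 : {poly R}, (size p1 <= n1)%N -> (size p2 <= n2)%N ->
     (forall x, x \in Delta -> p1.[x] * a1 x + p2.[x] * a2 x = 0) ->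
     p1 = 0 /\ p2 = 0) /\
  (forall p1 p2 : {poly R}, (size p1 <= n1)%N -> (size p2 <= n2)%N ->
     (p1 != 0) || (p2 != 0) ->
     forall s : seq R, uniq s -> all (fun x => x \in Delta) s ->
       all (fun x => p1.[x] * a1 x + p2.[x] * a2 x == 0) s ->
       (size s <= (n1 + n2).-1)%N).

(* mu_j = sum_i alpha_j i delta_{z i} form an AT-system on Delta. *)
Definition AT_system {R : realType} (N : nat) (z : 'I_N -> R)
  (alpha1 alpha2 : 'I_N -> R) (Delta : interval R) : Prop :=
  exists a1 a2 : R -> R,
    {within [set` Delta], continuous a1} /\
    {within [set` Delta], continuous a2} /\
    (forall i, a1 (z i) = alpha1 i) /\ (forall i, a2 (z i) = alpha2 i) /\
    (forall n1 n2 : nat, (n1 + n2 <= N)%N -> chebyshev_pair Delta a1 a2 n1 n2).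

Definition typeI_MOP {R : realType} (N : nat) (z : 'I_N -> R)
  (alpha1 alpha2 : 'I_N -> R) (n : nat) (A1 A2 : {poly R}) : Prop :=
  (size A1 <= sl1 n)%N /\ (size A2 <= sl2 n)%N /\
  (forall k : nat, (k < n)%N ->
     \sum_(i < N) (alpha1 i * A1.[z i] + alpha2 i * A2.[z i]) * z i ^+ k
       = (k == n.-1)%:R).

Definition typeII_MOP {R : realType} (N : nat) (z : 'I_N -> R)
  (alpha1 alpha2 : 'I_N -> R) (n : nat) (P : {poly R}) : Prop :=
  P \is monic /\ size P = n.+1 /\
  (forall k : nat, (k < sl1 n)%N -> \sum_(i < N) alpha1 i * P.[z i] * z i ^+ k = 0) /\
  (forall k : nat, (k < sl2 n)%N -> \sum_(i < N) alpha2 i * P.[z i] * z i ^+ k = 0).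

Definition prevP {R : realType} (P : nat -> {poly R}) (n k : nat) : {poly R} :=
  if (k <= n)%N then P (n - k)%N else 0.

From HB Require Import structures.
From mathcomp Require Import all_boot all_order all_algebra.
From mathcomp Require Import all_classical all_reals topology normedtype.
From mathcomp Require Import zify.
Import Order.TTheory GRing.Theory Num.Theory.
Local Open Scope ring_scope.

(* If d_{n+1} = 0, the four-term recurrence expresses x A_{n,j} through
   A_{n-1,j}, A_{n,j}, A_{n+1,j}.  On the step-line one of the two components
   keeps its degree from n to n+1 (the second one for n even, the first one
   for n odd), and degrees never decrease; for that component the right-hand
   side has degree at most deg A_{n,j}, while the left-hand side has degree
   deg A_{n,j} + 1. *)

Lemma mulX_recurrence_last_coef_neq0 (R : idomainType) (p q r s : {poly R})
    (a e f : R) :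
  p != 0 -> (size q <= size p)%N -> (size r <= size p)%N ->
  'X * p = q + a *: p + e *: r + f *: s -> f != 0.
Proof.
move=> p_neq0 q_le r_le rec; apply/eqP => f0.
move: rec; rewrite f0 scale0r addr0 => rec.
have : (size (q + a *: p + e *: r)%R <= size p)%N.
  rewrite (leq_trans (size_polyD _ _)) // geq_max.
  rewrite (leq_trans (size_polyD _ _)) ?geq_max ?q_le ?size_scale_leq //=.
  exact: leq_trans (size_scale_leq _ _) r_le.
by rewrite -rec mulrC size_mulX // ltnn.
Qed.

Lemma sl1_leq {m n} : (m <= n)%N -> (sl1 m <= sl1 n)%N.
Proof. exact: uphalf_leq. Qed.

Lemma sl2_leq {m n} : (m <= n)%N -> (sl2 m <= sl2 n)%N.
Proof. exact: half_leq. Qed.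

Lemma sl1S_odd n : odd n -> sl1 n.+1 = sl1 n.
Proof. by move=> n_odd; rewrite /sl1 (uphalf_half n) n_odd uphalfE. Qed.

Lemma sl2S_even n : ~~ odd n -> sl2 n.+1 = sl2 n.
Proof. by move=> n_even; rewrite /sl2 -uphalfE uphalf_half (negbTE n_even). Qed.

Lemma sl1_gt0 n : (0 < n)%N -> (0 < sl1 n)%N.
Proof. by rewrite uphalf_gt0. Qed.

Lemma sl2_gt0 n : ~~ odd n -> (0 < n)%N -> (0 < sl2 n)%N.
Proof. by case: n => [|[|n]] //=; rewrite half_gt0. Qed.

Theorem mainTheorem3 (R : realType) (N : nat) (z : 'I_N -> R)
  (alpha1 alpha2 : 'I_N -> R) (Delta : interval R)
  (A1 A2 P : nat -> {poly R}) (b c d : nat -> R) :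
  injective z ->
  (forall i, 0 < alpha1 i) -> (forall i, 0 < alpha2 i) ->
  (forall i, z i \in Delta) ->
  AT_system z alpha1 alpha2 Delta ->
  (forall n, (1 <= n <= N)%N -> typeI_MOP z alpha1 alpha2 n (A1 n) (A2 n)) ->
  (forall n, (1 <= n <= N)%N -> size (A1 n) = sl1 n /\ size (A2 n) = sl2 n) ->
  A1 0%N = 0 -> A2 0%N = 0 ->
  (forall n, (n <= N)%N -> typeII_MOP z alpha1 alpha2 n (P n)) ->
  (forall n, (n < N)%N ->
     'X * P n = P n.+1 + b n *: P n + c n *: prevP P n 1 + d n *: prevP P n 2) ->
  (forall n, (1 <= n)%N -> (n <= N - 2)%N ->
     'X * A1 n = A1 n.-1 + b n.-1 *: A1 n + c n *: A1 n.+1 + d n.+1 *: A1 n.+2 /\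
     'X * A2 n = A2 n.-1 + b n.-1 *: A2 n + c n *: A2 n.+1 + d n.+1 *: A2 n.+2) ->
  forall n, (1 <= n)%N -> (n <= N - 2)%N -> d n.+1 != 0.
Proof.
move=> _ _ _ _ _ _ size_A A10 A20 _ _ recA n n_gt0 n_le.
have [rec1 rec2] := recA n n_gt0 n_le.
have size_le m : (m <= N)%N -> (size (A1 m) <= sl1 m /\ size (A2 m) <= sl2 m)%N.
  case: m => [|m] m_le; first by rewrite A10 A20 size_poly0.
  by have [-> ->] := size_A m.+1 m_le.
have [sz1 sz2] := size_A n ltac:(lia).
have [szS1 szS2] := size_A n.+1 ltac:(lia).
have [szP1 szP2] := size_le n.-1 ltac:(lia).
case/boolP: (odd n) => [n_odd | n_even].
- apply: mulX_recurrence_last_coef_neq0 rec1.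
  + by rewrite -size_poly_eq0 sz1 -lt0n sl1_gt0.
  + by rewrite sz1 (leq_trans szP1 (sl1_leq (leq_pred n))).
  + by rewrite sz1 szS1 sl1S_odd.
- apply: mulX_recurrence_last_coef_neq0 rec2.
  + by rewrite -size_poly_eq0 sz2 -lt0n sl2_gt0.
  + by rewrite sz2 (leq_trans szP2 (sl2_leq (leq_pred n))).
  + by rewrite sz2 szS2 sl2S_even.
Qed.
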